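(* Let $G$ be a cubic graph and let $J_1,J_2,J_3$ be three joins of $G$. For $i\in\{0,1,2,3\}$ let $E_i$ be the set of edges of $G$ contained in precisely $i$ of the sets $J_1,J_2,J_3$, and let $G_c=G[E_0\cup E_2\cup E_3]$ be the weak core of $G$ with respect to $J_1,J_2,J_3$. Then $G[E_0\cup E_2]$ is either an empty graph or a cycle.
   Context: A join of a graph $H$ is a set $J\subseteq E(H)$ such that every vertex has degree of the same parity in $H$ and in the spanning subgraph $(V(H),J)$. For $X\subseteq E(G)$, $G[X]$ denotes the subgraph induced by the edge set $X$. A cycle is a graph in which every vertex has even degree (equivalently, here, a union of edge-disjoint circuits). *)

(* Finite multigraphs (parallel edges and loops allowed). *)
From mathcomp Require Import all_boot.
Set Implicit Arguments. Unset Strict Implicit. Unset Printing Implicit Defensive.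

Record graph := Graph {
  vertex : finType;
  edge : finType;
  ends : edge -> vertex * vertex }.

(* number of ends of e equal to v (a loop counts twice) *)
Definition inc (G : graph) (e : edge G) (v : vertex G) : nat :=
  ((ends e).1 == v) + ((ends e).2 == v).

Definition deg (G : graph) (F : {set edge G}) (v : vertex G) : nat :=
  \sum_(e in F) inc e v.

Definition cubic (G : graph) : Prop := forall v, deg [set: edge G] v = 3.

Definition is_join (G : graph) (J : {set edge G}) : Prop :=
  forall v, odd (deg J v) = odd (deg [set: edge G] v).

(* G[X] is a cycle: every vertex of G[X] has even degree; vertices of G
   not incident with X have degree 0 in (V,X), so we quantify over all V. *)
Definition is_cycle (G : graph) (X : {set edge G}) : Prop :=
  forall v, ~~ odd (deg X v).

Definition mult (G : graph) (J1 J2 J3 : {set edge G}) (e : edge G) : nat :=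
  (e \in J1) + (e \in J2) + (e \in J3).

Definition Ei (G : graph) (J1 J2 J3 : {set edge G}) (i : nat) : {set edge G} :=
  [set e | mult J1 J2 J3 e == i].

Definition weak_core (G : graph) (J1 J2 J3 : {set edge G}) : {set edge G} :=
  Ei J1 J2 J3 0 :|: Ei J1 J2 J3 2 :|: Ei J1 J2 J3 3.

From mathcomp Require Import all_boot.

Set Implicit Arguments.
Unset Strict Implicit.
Unset Printing Implicit Defensive.

(** Degree parity is additive over symmetric differences of edge sets, so
    the symmetric difference of three joins is again a join (each vertex gets
    three times the parity it has in [G]), and the complement of a join is a
    cycle.  An edge lies in [E0 ∪ E2] exactly when it lies in an even number
    of the [Ji], i.e. outside [J1 ⊕ J2 ⊕ J3]; hence [G[E0 ∪ E2]] is a cycle. *)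

Definition symdiff (T : finType) (A B : {set T}) : {set T} :=
  (A :\: B) :|: (B :\: A).

Lemma in_symdiff (T : finType) (A B : {set T}) x :
  (x \in symdiff A B) = (x \in A) (+) (x \in B).
Proof. by rewrite !inE; case: (x \in A); case: (x \in B). Qed.

Section DegreeParity.

Variable G : graph.
Implicit Types (A B J : {set edge G}) (v : vertex G).

Lemma odd_degE A v :
  odd (deg A v) = \big[addb/false]_e ((e \in A) && odd (inc e v)).
Proof.
rewrite /deg (big_morph odd oddD (erefl (odd 0))) big_mkcond /=.
by apply: eq_bigr => e _; case: (e \in A).
Qed.

Lemma odd_deg_symdiff A B v :
  odd (deg (symdiff A B) v) = odd (deg A v) (+) odd (deg B v).
Proof.
rewrite !odd_degE -big_split /=; apply: eq_bigr => e _.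
by rewrite in_symdiff andb_addl.
Qed.

Lemma join_symdiff3 J1 J2 J3 :
  is_join J1 -> is_join J2 -> is_join J3 -> is_join (symdiff (symdiff J1 J2) J3).
Proof.
move=> j1 j2 j3 v; rewrite !odd_deg_symdiff j1 j2 j3.
by case: (odd _).
Qed.

Lemma cycle_setC_join J : is_join J -> is_cycle (~: J).
Proof.
move=> jJ v; have -> : ~: J = symdiff [set: edge G] J.
  by apply/setP => e; rewrite /symdiff !inE; case: (e \in J).
by rewrite odd_deg_symdiff jJ addbb.
Qed.

Lemma Ei02_setC_symdiff J1 J2 J3 :
  Ei J1 J2 J3 0 :|: Ei J1 J2 J3 2 = ~: symdiff (symdiff J1 J2) J3.
Proof.
apply/setP => e; rewrite in_setC !in_symdiff !inE /mult.
by case: (e \in J1); case: (e \in J2); case: (e \in J3).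
Qed.

End DegreeParity.

Theorem proposition2p2 (G : graph) (J1 J2 J3 : {set edge G}) :
  cubic G -> is_join J1 -> is_join J2 -> is_join J3 ->
  let X := Ei J1 J2 J3 0 :|: Ei J1 J2 J3 2 in
  X = set0 \/ is_cycle X.
Proof.
move=> _ j1 j2 j3 X; right.
rewrite /X Ei02_setC_symdiff.
exact/cycle_setC_join/join_symdiff3.
Qed.
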